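(* Let $A,\xi_0>0$, $0<\alpha<\frac12$, and let $\{w_n\}_{n\ge0}$ be functions $w_n\colon(0,\xi_0]\to[0,1]$ with $w_{n+1}(\xi)\le w_n(\xi)$ for all $n,\xi$. If $w_{n+k}(\xi)\le4(1-A\xi^2)^kw_n(\xi)$ for all $\xi\in(0,\xi_0]$ and all integers $k,n\ge0$, then the sequence $$s_n=\sup\{w_n(\xi):\ n^{-\alpha}\le\xi\le\xi_0\}$$ decays rapidly in $n$.
   Context: A sequence $\{s_n\}$ decays rapidly in $n$ if for each $\ell\ge1$ there is $C$ with $|s_n|\le Cn^{-\ell}$ for all $n\ge1$ (a supremum over the empty set is taken to be $0$). *)

From Stdlib Require Import Reals.
From Coquelicot Require Import Coquelicot.
Open Scope R_scope.

Definition decays_rapidly (s : nat -> R) : Prop :=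
  forall l : nat, (1 <= l)%nat ->
    exists C : R, forall n : nat, (1 <= n)%nat ->
      Rabs (s n) <= C * Rpower (INR n) (- INR l).

(* s_n = sup { w_n(xi) : n^(-alpha) <= xi <= xi0 }.
   Lub_Rbar of the empty set is m_infty and [real m_infty = 0], so the
   supremum over the empty set is 0, as in the paper's convention. *)
Definition sup_tail (w : nat -> R -> R) (alpha xi0 : R) (n : nat) : R :=
  real (Lub_Rbar (fun y => exists xi,
          Rpower (INR n) (- alpha) <= xi <= xi0 /\ y = w n xi)).

(* For xi >= n^(-alpha) the hypotheses give w_n(xi) <= 4 (1 - A xi^2)^n <= 4 exp(-A n xi^2)
   <= 4 exp(-A n^(1 - 2 alpha)), a stretched exponential since alpha < 1/2; such a bound
   beats every power n^(-l), because exp y >= (y/m)^m.  When 1 - A xi^2 < 0, one step of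
   the decay hypothesis already forces w_n(xi) = 0. *)
From Stdlib Require Import Reals.
From Coquelicot Require Import Coquelicot.
From Stdlib Require Import Lra Lia Classical.
Open Scope R_scope.

Lemma Rabs_real_Lub_Rbar_le (E : R -> Prop) (B : R) :
  0 <= B -> (forall y, E y -> 0 <= y <= B) -> Rabs (real (Lub_Rbar E)) <= B.
Proof.
  intros HB HE.
  destruct (Lub_Rbar_correct E) as [Hub Hlub].
  assert (Hle : Rbar_le (Lub_Rbar E) (Finite B)).
  { apply Hlub. intros x Ex. apply HE; auto. }
  destruct (classic (exists y, E y)) as [[y Ey]|Hempty].
  - pose proof (Hub y Ey) as Hy. pose proof (HE y Ey).
    destruct (Lub_Rbar E) as [r| |]; simpl in *; try contradiction.
    rewrite Rabs_right; lra.
  - destruct (Lub_Rbar E) as [r| |]; simpl in *; try contradiction.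
    + assert (Hr : r <= r - 1).
      { apply (Hlub (Finite (r - 1))). intros x Ex. exfalso; eauto. }
      lra.
    + rewrite Rabs_R0; lra.
Qed.

Lemma decays_rapidly_le (s t : nat -> R) (c : R) :
  0 <= c -> (forall n, (1 <= n)%nat -> Rabs (s n) <= c * t n) ->
  decays_rapidly t -> decays_rapidly s.
Proof.
  intros Hc Hst Ht l Hl.
  destruct (Ht l Hl) as [C HC].
  exists (c * C). intros n Hn.
  apply Rle_trans with (c * t n); [now apply Hst|].
  rewrite Rmult_assoc. apply Rmult_le_compat_l; [exact Hc|].
  apply Rle_trans with (Rabs (t n)); [apply Rle_abs | now apply HC].
Qed.

Lemma exp_pow (x : R) (m : nat) : exp x ^ m = exp (INR m * x).
Proof.
  rewrite <- Rpower_pow by apply exp_pos. unfold Rpower. now rewrite ln_exp.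
Qed.

Lemma pow_div_le_exp (y : R) (m : nat) : 0 <= y -> (1 <= m)%nat -> (y / INR m) ^ m <= exp y.
Proof.
  intros Hy Hm.
  assert (HM : 0 < INR m) by (apply lt_0_INR; lia).
  assert (Hym : 0 <= y / INR m) by (apply Rdiv_le_0_compat; lra).
  replace (exp y) with (exp (y / INR m) ^ m) by (rewrite exp_pow; f_equal; field; lra).
  apply pow_incr. pose proof (exp_ineq1_le (y / INR m)). lra.
Qed.

Lemma pow_one_sub_le_exp (x : R) (n : nat) : 0 <= 1 - x -> (1 - x) ^ n <= exp (- (INR n * x)).
Proof.
  intros Hx.
  replace (- (INR n * x)) with (INR n * - x) by ring. rewrite <- exp_pow.
  apply pow_incr. pose proof (exp_ineq1_le (- x)). lra.
Qed.

Lemma exp_neg_Rpower_le (A beta l N : R) (m : nat) :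
  0 < A -> 1 <= N -> (1 <= m)%nat -> l <= INR m * beta ->
  exp (- (A * Rpower N beta)) <= (INR m / A) ^ m * Rpower N (- l).
Proof.
  intros HA HN Hm Hl.
  assert (HM : 0 < INR m) by (apply lt_0_INR; lia).
  assert (HP : 0 < Rpower N beta) by apply exp_pos.
  assert (HPl : 0 < Rpower N l) by apply exp_pos.
  assert (Hc : 0 < (A / INR m) ^ m) by (apply pow_lt, Rdiv_lt_0_compat; lra).
  assert (Hpow : (A * Rpower N beta / INR m) ^ m = (A / INR m) ^ m * Rpower N (INR m * beta)).
  { rewrite (Rmult_comm (INR m) beta), <- Rpower_mult, Rpower_pow by exact HP.
    unfold Rdiv. rewrite !Rpow_mult_distr. ring. }
  assert (Hexp := pow_div_le_exp (A * Rpower N beta) m ltac:(nra) Hm).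
  assert (Hmono : Rpower N l <= Rpower N (INR m * beta)) by (apply Rle_Rpower; lra).
  assert (Hlow : (A / INR m) ^ m * Rpower N l <= exp (A * Rpower N beta)) by nra.
  rewrite exp_Ropp, Rpower_Ropp.
  replace ((INR m / A) ^ m) with (/ (A / INR m) ^ m)
    by (rewrite <- pow_inv; f_equal; field; lra).
  rewrite <- Rinv_mult.
  apply Rinv_le_contravar; [nra | exact Hlow].
Qed.

Lemma decays_rapidly_exp_neg_Rpower (A beta : R) :
  0 < A -> 0 < beta -> decays_rapidly (fun n => exp (- (A * Rpower (INR n) beta))).
Proof.
  intros HA Hb l _.
  destruct (INR_unbounded (INR l / beta)) as [m Hm].
  assert (Hml : INR l <= INR (S m) * beta).
  { rewrite S_INR. apply Rmult_gt_compat_r with (r := beta) in Hm; [|exact Hb].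
    unfold Rdiv in Hm. rewrite Rmult_assoc, Rinv_l in Hm by lra. nra. }
  exists ((INR (S m) / A) ^ S m). intros n Hn.
  rewrite Rabs_right by (apply Rle_ge, Rlt_le, exp_pos).
  apply exp_neg_Rpower_le; auto with arith.
  apply (le_INR 1); exact Hn.
Qed.

Lemma Rpower_one_sub_double_le (N alpha xi : R) :
  0 < N -> Rpower N (- alpha) <= xi -> Rpower N (1 - 2 * alpha) <= N * xi ^ 2.
Proof.
  intros HN Hxi.
  assert (Ht : 0 < Rpower N (- alpha)) by apply exp_pos.
  assert (Hsq : Rpower N (- alpha) ^ 2 = Rpower N (- (2 * alpha))).
  { rewrite <- Rpower_pow by exact Ht. rewrite Rpower_mult. f_equal. simpl. ring. }
  replace (1 - 2 * alpha) with (1 + - (2 * alpha)) by ring.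
  rewrite Rpower_plus, Rpower_1, <- Hsq by exact HN.
  apply Rmult_le_compat_l; [lra|]. apply pow_incr; lra.
Qed.

Section Decay.

Variables (A xi0 : R) (w : nat -> R -> R).
Hypothesis w_01 : forall n xi, 0 < xi <= xi0 -> 0 <= w n xi <= 1.
Hypothesis w_decay : forall xi k n, 0 < xi <= xi0 ->
  w (n + k)%nat xi <= 4 * (1 - A * xi ^ 2) ^ k * w n xi.

Lemma w_le_exp (n : nat) (xi : R) :
  0 < xi <= xi0 -> w n xi <= 4 * exp (- (INR n * (A * xi ^ 2))).
Proof.
  intros Hxi.
  pose proof (exp_pos (- (INR n * (A * xi ^ 2)))) as Hexp.
  destruct (Rlt_or_le (1 - A * xi ^ 2) 0) as [Hneg|Hnonneg].
  - destruct n as [|n].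
    + pose proof (w_01 0 xi Hxi). simpl. rewrite Rmult_0_l, Ropp_0, exp_0. lra.
    + pose proof (w_decay xi 1 n Hxi) as Hstep. pose proof (w_01 n xi Hxi).
      rewrite Nat.add_1_r in Hstep. simpl in Hstep. nra.
  - pose proof (w_decay xi n 0 Hxi) as Hn. pose proof (w_01 0 xi Hxi).
    pose proof (pow_one_sub_le_exp (A * xi ^ 2) n Hnonneg).
    assert (0 <= (1 - A * xi ^ 2) ^ n) by (apply pow_le; lra).
    simpl (0 + n)%nat in Hn. nra.
Qed.

Lemma sup_tail_le (alpha : R) (n : nat) : 0 <= A -> (1 <= n)%nat ->
  Rabs (sup_tail w alpha xi0 n) <= 4 * exp (- (A * Rpower (INR n) (1 - 2 * alpha))).
Proof.
  intros HA Hn.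
  assert (HN : 0 < INR n) by (apply lt_0_INR; lia).
  assert (Hpos : 0 < Rpower (INR n) (- alpha)) by apply exp_pos.
  pose proof (exp_pos (- (A * Rpower (INR n) (1 - 2 * alpha)))).
  apply Rabs_real_Lub_Rbar_le; [lra|].
  intros y [xi [[Hlo Hhi] ->]].
  assert (Hxi : 0 < xi <= xi0) by lra.
  split; [now apply w_01|].
  apply Rle_trans with (1 := w_le_exp n xi Hxi).
  apply Rmult_le_compat_l; [lra|].
  assert (Hexponent : A * Rpower (INR n) (1 - 2 * alpha) <= INR n * (A * xi ^ 2)).
  { pose proof (Rpower_one_sub_double_le (INR n) alpha xi HN Hlo). nra. }
  destruct Hexponent as [Hlt|Heq].
  - apply Rlt_le, exp_increasing. lra.
  - rewrite Heq. lra.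
Qed.

End Decay.

Theorem proposition7p4 (A xi0 alpha : R) (w : nat -> R -> R) :
  0 < A -> 0 < xi0 -> 0 < alpha < 1/2 ->
  (forall n xi, 0 < xi <= xi0 -> 0 <= w n xi <= 1) ->
  (forall n xi, 0 < xi <= xi0 -> w (S n) xi <= w n xi) ->
  (forall xi k n, 0 < xi <= xi0 ->
     w (n + k)%nat xi <= 4 * (1 - A * xi ^ 2) ^ k * w n xi) ->
  decays_rapidly (sup_tail w alpha xi0).
Proof.
  intros HA _ Halpha Hw01 _ Hdecay.
  apply decays_rapidly_le with (c := 4)
    (t := fun n => exp (- (A * Rpower (INR n) (1 - 2 * alpha)))); [lra| |].
  - intros n Hn. apply sup_tail_le; auto; lra.
  - apply decays_rapidly_exp_neg_Rpower; lra.
Qed.
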